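(* Let $G=(V,E)$ be a finite connected undirected graph with probability weights $w:E\to\mathbb{R}_{>0}$ and degree weights $\omega:E\to\mathbb{R}$, and let $r\in V$ be arbitrary. Let $T$ be a random spanning tree of $G$ with $\Pr(T)\propto\prod_{e\in E_T}w(e)$. For a node $v\in V$, $$\mathbb{E}\big[\deg^{\omega}_T(v)\big]=\operatorname{Tr}\Big[\big(L^{(1)}_v\big)^{[r]}\big(L_G^{[r]}\big)^{-1}\Big],$$ $$\operatorname{Var}\big[\deg^{\omega}_T(v)\big]=\operatorname{Tr}\Big[\Big(\big(L^{(2)}_v\big)^{[r]}-\big(L^{(1)}_v\big)^{[r]}\big(L_G^{[r]}\big)^{-1}\big(L^{(1)}_v\big)^{[r]}\Big)\big(L_G^{[r]}\big)^{-1}\Big].$$ Moreover, for a second node $u\in V$, $u\neq v$, $$\operatorname{Cov}\big(\deg^{\omega}_T(v),\deg^{\omega}_T(u)\big)=\operatorname{Tr}\Big[\Big(\big(L^{(2)}_{vu}\big)^{[r]}-\big(L^{(1)}_v\big)^{[r]}\big(L_G^{[r]}\big)^{-1}\big(L^{(1)}_u\big)^{[r]}\Big)\big(L_G^{[r]}\big)^{-1}\Big].$$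
   Context: For an edge weight function $c:E\to\mathbb{R}$ on $G$, its Laplacian is $L=D-A$ where $A_{ij}=c(\{i,j\})$ (zero if $\{i,j\}\notin E$) and $D$ is diagonal with $D_{ii}=\sum_j A_{ij}$. $L_G$ is the Laplacian for the weights $w$. For a node $v$ and $p\in\{1,2\}$, $L^{(p)}_v$ is the Laplacian for the weights $c(e)=w(e)\omega(e)^p$ if $v\in e$ and $c(e)=0$ otherwise (i.e. only edges incident to $v$ kept, with weights scaled by $\omega^p$). $L^{(2)}_{vu}$ is the Laplacian for the weights $c(\{u,v\})=w(\{u,v\})\omega(\{u,v\})^2$ and $c(e)=0$ for all other edges (the zero matrix if $\{u,v\}\notin E$). For a matrix $M$ indexed by $V$, $M^{[r]}$ is $M$ with the row and column indexed by $r$ removed. The weighted degree of $v$ in $T$ is $\deg^{\omega}_T(v)=\sum_{e\in E_T,\, v\in e}\omega(e)$, and $\operatorname{Tr}$ is the trace. *)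

From HB Require Import structures.
From mathcomp Require Import all_boot all_order all_algebra.
Set Implicit Arguments. Unset Strict Implicit. Unset Printing Implicit Defensive.
Import Order.TTheory GRing.Theory Num.Theory.
Local Open Scope ring_scope.

(* The vertex set is 'I_n.+1; an undirected simple graph is a set E of
   2-element subsets of vertices (its edges). *)
Section Defs.
Variable n : nat.
Notation V := 'I_n.+1.
Notation edge := {set V}.

Definition simple_graph (E : {set edge}) : Prop :=
  forall e, e \in E -> #|e| = 2%N.

Definition edge_rel (F : {set edge}) : rel V := fun x y => [set x; y] \in F.

Definition connectedb (F : {set edge}) : bool :=
  [forall x : V, forall y : V, connect (edge_rel F) x y].

(* acyclic: every edge of F is a bridge of F *)
Definition acyclic (F : {set edge}) : bool :=
  [forall x : V, forall y : V, ([set x; y] \in F) ==>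
    ~~ connect (edge_rel (F :\ [set x; y])) x y].

Definition spanning_tree (E F : {set edge}) : bool :=
  [&& F \subset E, connectedb F & acyclic F].

Definition spanning_trees (E : {set edge}) : {set {set edge}} :=
  [set F | spanning_tree E F ].

Variable R : realFieldType.

Definition tree_weight (w : edge -> R) (F : {set edge}) : R := \prod_(e in F) w e.

Definition tree_expect (E : {set edge}) (w : edge -> R) (X : {set edge} -> R) : R :=
  (\sum_(F in spanning_trees E) tree_weight w F * X F) /
  (\sum_(F in spanning_trees E) tree_weight w F).

Definition tree_var E w (X : {set edge} -> R) : R :=
  tree_expect E w (fun F => X F ^+ 2) - (tree_expect E w X) ^+ 2.

Definition tree_cov E w (X Y : {set edge} -> R) : R :=
  tree_expect E w (fun F => X F * Y F) - tree_expect E w X * tree_expect E w Y.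

Definition wdeg (om : edge -> R) (F : {set edge}) (v : V) : R :=
  \sum_(e in F | v \in e) om e.

Definition adjw (E : {set edge}) (c : edge -> R) : 'M[R]_n.+1 :=
  \matrix_(i, j) (if [set i; j] \in E then c [set i; j] else 0).

Definition laplacian (E : {set edge}) (c : edge -> R) : 'M[R]_n.+1 :=
  \matrix_(i, j) ((i == j)%:R * (\sum_k adjw E c i k) - adjw E c i j).

Definition lapv (E : {set edge}) (w om : edge -> R) (p : nat) (v : V) :=
  laplacian E (fun e => if v \in e then w e * om e ^+ p else 0).

Definition lapvu (E : {set edge}) (w om : edge -> R) (v u : V) :=
  laplacian E (fun e => if e == [set v; u] then w e * om e ^+ 2 else 0).

Definition delrc (r : V) (M : 'M[R]_n.+1) : 'M[R]_n := row' r (col' r M).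

End Defs.

(* Write the Laplacian grounded at [r] as [B diag(c) B^T], with [B] the signed
   incidence matrix without row [r]. Expanding its determinant multilinearly
   in the rows gives a sum over maps [f] choosing an edge [f x] for every vertex
   [x <> r]; the term of [f] vanishes unless every [x] lies on [f x], the [f x]
   are distinct and they connect the graph. Those [f] are exactly the maps
   sending [x] to the edge towards its parent in a breadth-first spanning tree,
   and their term is the tree weight: this is the matrix-tree theorem, over any
   commutative ring. Over [R[s][t]] with weights [w (1 + s b) (1 + t a)] it makes
   [det L] the generating function of the tree sums of [\sum_T a] and
   [(\sum_T a) (\sum_T b)]. Jacobi's formula (the [t]-coefficient of
   [det (P + t Q)] is [tr (adj P Q)]), applied twice, turns these coefficients
   into traces involving [L(w)^-1], and dividing by [det L(w) = \sum_T w(T) > 0]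
   gives the mean and covariance of edge sums, such as weighted degrees. *)

From mathcomp Require Import all_boot all_order all_algebra fingroup perm.
From mathcomp Require Import ring.
Set Implicit Arguments. Unset Strict Implicit. Unset Printing Implicit Defensive.
Import Order.TTheory GRing.Theory Num.Theory.
Local Open Scope ring_scope.

(** * Jacobi's formula for matrix pencils *)

Section PencilCoef.
Variable K : comNzRingType.
Implicit Types p q : {poly K}.

Lemma coef1M p q : (p * q)`_1 = p`_0 * q`_1 + p`_1 * q`_0.
Proof. by rewrite coefM big_ord_recr big_ord1. Qed.

Lemma coef1_prod (I : eqType) (s : seq I) (F : I -> {poly K}) : uniq s ->
  (\prod_(i <- s) F i)`_1 = \sum_(k <- s) (F k)`_1 * \prod_(i <- s | i != k) (F i)`_0.
Proof.
elim: s => [|x s IH] /=; first by rewrite !big_nil coefC.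
case/andP=> xs us; rewrite !big_cons coef1M IH // coef0_prod eqxx /= addrC.
congr (_ * _ + _).
  rewrite -[RHS]big_filter (_ : [seq i <- s | i != x] = s) //.
  by apply/all_filterP/allP => i si; apply: contraNneq xs => <-.
rewrite big_distrr /=; apply: eq_big_seq => k ks.
have xk : x != k by apply: contraNneq xs => ->.
by rewrite big_cons xk mulrCA.
Qed.

Lemma coef1_prod_1X (I : finType) (P : pred I) (b : I -> K) :
  (\prod_(i | P i) (1 + (b i)%:P * 'X))`_1 = \sum_(i | P i) b i.
Proof.
rewrite -big_filter -[RHS]big_filter coef1_prod ?filter_uniq ?index_enum_uniq //.
apply: eq_bigr => i _; rewrite big1 => [|j _]; rewrite coefD coef1 coefCM coefX /=.
  by rewrite add0r !mulr1.
by rewrite mulr0 addr0.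
Qed.

Definition pencil m (P Q : 'M[K]_m) : 'M[{poly K}]_m :=
  map_mx polyC P + 'X *: map_mx polyC Q.

Definition coef_mx k m (M : 'M[{poly K}]_m) : 'M[K]_m := map_mx (coefp k) M.

Section Pencil.
Variables (m : nat) (P Q : 'M[K]_m).

Lemma coef0_pencil i j : (pencil P Q i j)`_0 = P i j.
Proof. by rewrite !mxE coefD coefXM !coefC addr0. Qed.

Lemma coef1_pencil i j : (pencil P Q i j)`_1 = Q i j.
Proof. by rewrite !mxE coefD coefXM !coefC add0r. Qed.

Lemma coef_mx_pencil0 : coef_mx 0 (pencil P Q) = P.
Proof. by apply/matrixP => i j; rewrite mxE /coefp coef0_pencil. Qed.

Lemma coef_mx_pencil1 : coef_mx 1 (pencil P Q) = Q.
Proof. by apply/matrixP => i j; rewrite mxE /coefp coef1_pencil. Qed.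

Lemma mxtrace_adj_mul :
  \tr (\adj P *m Q) = \sum_k \det (\matrix_(i, j) if i == k then Q i j else P i j).
Proof.
rewrite /mxtrace (eq_bigr (fun i => \sum_k Q k i * cofactor P k i)); last first.
  by move=> i _; rewrite mxE; apply: eq_bigr => k _; rewrite mxE mulrC.
rewrite exchange_big /=; apply: eq_bigr => k _; rewrite (expand_det_row _ k).
apply: eq_bigr => j _; rewrite mxE eqxx; congr (_ * (_ * \det _)).
by apply/matrixP => a b; rewrite !mxE eq_sym (negbTE (neq_lift _ _)).
Qed.

Lemma coef1_det_pencil : (\det (pencil P Q))`_1 = \tr (\adj P *m Q).
Proof.
rewrite mxtrace_adj_mul /determinant coef_sum exchange_big /=; apply: eq_bigr => s _.
rewrite -(rmorph_sign polyC) coefCM coef1_prod ?index_enum_uniq // big_distrr /=.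
apply: eq_bigr => k _; rewrite [in RHS](bigD1 k) //= coef1_pencil !mxE eqxx.
by congr (_ * (_ * _)); apply: eq_bigr => i ik; rewrite coef0_pencil mxE (negbTE ik).
Qed.

End Pencil.

Section CoefMx.
Variable m : nat.
Implicit Types M N : 'M[{poly K}]_m.

Lemma coef_mx1M M N :
  coef_mx 1 (M *m N) = coef_mx 0 M *m coef_mx 1 N + coef_mx 1 M *m coef_mx 0 N.
Proof.
apply/matrixP => i j; rewrite !mxE /coefp coef_sum -big_split /=.
by apply: eq_bigr => k _; rewrite !mxE coef1M.
Qed.

Lemma coef_mxtrace k M : (\tr M)`_k = \tr (coef_mx k M).
Proof. by rewrite /mxtrace coef_sum; apply: eq_bigr => i _; rewrite mxE. Qed.

Lemma coef_mx_scalar k (a : {poly K}) : coef_mx k (a%:M : 'M_m) = (a`_k)%:M.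
Proof. by apply/matrixP => i j; rewrite !mxE /coefp coefMn. Qed.

Lemma coef_mx0_adj M : coef_mx 0 (\adj M) = \adj (coef_mx 0 M).
Proof. exact: map_mx_adj. Qed.

End CoefMx.

End PencilCoef.

Arguments coef_mx {K} k {m} M.

Section Bipencil.
Variables (R : fieldType) (m : nat).
Implicit Types A B C D : 'M[R]_m.

Lemma adj_invmx A : \det A != 0 -> \adj A = \det A *: invmx A.
Proof.
move=> dA; have uA : A \in unitmx by rewrite unitmxE unitfE.
by rewrite /invmx uA scalerA mulfV // scale1r.
Qed.

Lemma coef_mx1_adj_pencil A C : A \in unitmx ->
  coef_mx 1 (\adj (pencil A C)) = ((\tr (\adj A *m C))%:M - \adj A *m C) *m invmx A.
Proof.
move=> uA; have := congr1 (coef_mx 1) (mul_adj_mx (pencil A C)).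
rewrite coef_mx1M coef_mx0_adj coef_mx_pencil0 coef_mx_pencil1 coef_mx_scalar.
by rewrite coef1_det_pencil => <-; rewrite addrC addKr mulmxK.
Qed.

Lemma coef11_det_bipencil A B C D : \det A != 0 ->
  let X := invmx A in
  (\det (pencil (pencil A C) (pencil B D)))`_1`_1 =
    \det A * (\tr (X *m D) + \tr (X *m C) * \tr (X *m B) - \tr (X *m C *m X *m B)).
Proof.
move=> dA X; have uA : A \in unitmx by rewrite unitmxE unitfE.
rewrite coef1_det_pencil coef_mxtrace coef_mx1M coef_mx0_adj !coef_mx_pencil0.
rewrite coef_mx_pencil1 coef_mx1_adj_pencil // adj_invmx //.
rewrite !mulmxBl !mul_scalar_mx -!scalemxAl -scaleN1r !mxtraceD !mxtraceZ.
ring.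
Qed.

End Bipencil.

(** * Spanning trees as breadth-first parent maps *)

Lemma cards2_mem2 (T : finType) (e : {set T}) (u v : T) : #|e| = 2%N -> u != v ->
  (u \in e) && (v \in e) = (e == [set u; v]).
Proof.
move=> /eqP/cards2P[x [y [nxy ->]]] nuv; apply/idP/eqP => [|->]; last first.
  by rewrite !inE !eqxx orbT.
rewrite !inE => /andP[/orP[]/eqP eu /orP[]/eqP ev]; subst u v;
  by rewrite ?eqxx // setUC in nuv *.
Qed.

Section SpanningTrees.
Variables (n : nat) (r : 'I_n.+1).
Notation V := 'I_n.+1.
Implicit Types (E F : {set {set V}}) (x y : V).

Lemma edge_rel_sym F : symmetric (edge_rel F).
Proof. by move=> x y; rewrite /edge_rel setUC. Qed.

Lemma connect_edge_relC F x y :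
  connect (edge_rel F) x y = connect (edge_rel F) y x.
Proof. exact: (sym_connect_sym (edge_rel_sym F)). Qed.

Lemma connectedbP F :
  reflect (forall x y, connect (edge_rel F) x y) (connectedb F).
Proof.
apply: (iffP forallP) => [h x y|h x]; first by move/forallP: (h x); apply.
by apply/forallP => y; apply: h.
Qed.

Lemma connectedb_to_root F :
  (forall x, connect (edge_rel F) x r) -> connectedb F.
Proof.
move=> h; apply/connectedbP => x y.
by apply: (connect_trans (h x)); rewrite connect_edge_relC.
Qed.

Lemma connect_edge_rel_subset F F' :
  F \subset F' -> subrel (connect (edge_rel F)) (connect (edge_rel F')).
Proof.
move=> sFF'; apply: connect_sub => x y xy; apply: connect1.
by rewrite /edge_rel (subsetP sFF').
Qed.

Lemma connectedb_setD1 F x y : connectedb F ->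
  connect (edge_rel (F :\ [set x; y])) x y -> connectedb (F :\ [set x; y]).
Proof.
move=> /connectedbP cF cxy; apply/connectedbP => a b.
apply: connect_sub (cF a b) => u v; rewrite /edge_rel => uv.
have [euv|neuv] := eqVneq [set u; v] [set x; y]; last first.
  by apply: connect1; rewrite /edge_rel in_setD1 neuv uv.
have [<-|nuv] := eqVneq u v; first exact: connect0.
have: (u \in [set x; y]) && (v \in [set x; y]).
  by rewrite -euv !inE !eqxx orbT.
rewrite !inE => /andP[/orP[]/eqP eu /orP[]/eqP ev]; subst u v;
  by rewrite ?eqxx // connect_edge_relC in nuv *.
Qed.

Lemma connect_edge_endpoints F e a b z : e \in F -> #|e| = 2%N ->
  a \in e -> b \in e -> connect (edge_rel F) a z = connect (edge_rel F) b z.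
Proof.
move=> eF e2 ae be; have [<- //|nab] := eqVneq a b.
have /eqP eab : e == [set a; b] by rewrite -(cards2_mem2 e2 nab) ae be.
have ab : edge_rel F a b by rewrite /edge_rel -eab.
by apply/idP/idP; apply: connect_trans; apply: connect1; rewrite // edge_rel_sym.
Qed.

Fixpoint ball F k : {set V} :=
  if k is k'.+1 then ball F k' :|: [set y | [exists x in ball F k', edge_rel F x y]]
  else [set r].

Lemma ball_subset F k l : (k <= l)%N -> ball F k \subset ball F l.
Proof.
move/subnK => <-; elim: (l - k)%N => [|d IH] //=.
exact: subset_trans IH (subsetUl _ _).
Qed.

Lemma last_path_ball F p :
  path (edge_rel F) r p -> last r p \in ball F (size p).
Proof.
elim/last_ind: p => [|p z IH]; first by rewrite /= set11.
rewrite rcons_path last_rcons size_rcons => /andP[/IH pF Fz] /=.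
by rewrite !inE; apply/orP; right; apply/existsP; exists (last r p); rewrite pF.
Qed.

Lemma connect_ball F x : connect (edge_rel F) r x -> x \in ball F n.
Proof.
case/connectP => p pF ->; case: (shortenP pF) => q qF uq _.
have szq : (size q <= n)%N.
  by have := max_card (mem (r :: q)); rewrite card_ord (card_uniqP uq).
exact: subsetP (ball_subset F szq) _ (last_path_ball qF).
Qed.

Definition depth F x : nat := find (fun k => x \in ball F k) (iota 0 n.+1).

Lemma ball_depth F x : connectedb F -> x \in ball F (depth F x).
Proof.
move/connectedbP => cF.
have hx : has (fun k => x \in ball F k) (iota 0 n.+1).
  by apply/hasP; exists n; rewrite ?mem_iota //=; apply: connect_ball.
have := nth_find 0%N hx; rewrite nth_iota //.
by rewrite -[X in (_ < X)%N](size_iota 0 n.+1) -has_find.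
Qed.

Lemma depth_min F x k : x \in ball F k -> (depth F x <= k)%N.
Proof.
move=> xk; rewrite leqNgt; apply/negP => lt_k.
have k_le_n : (k < n.+1)%N.
  by apply: leq_trans lt_k _; rewrite -[X in (_ <= X)%N](size_iota 0 n.+1) find_size.
by have := before_find 0%N lt_k; rewrite nth_iota // add0n xk.
Qed.

Definition parent F x : V :=
  odflt r [pick y | edge_rel F y x && (depth F y < depth F x)%N].

Lemma parentP F x : connectedb F -> x != r ->
  edge_rel F (parent F x) x && (depth F (parent F x) < depth F x)%N.
Proof.
move=> cF xr; rewrite /parent; case: pickP => [y //|no_parent]; exfalso.
move: (ball_depth x cF); case dx: (depth F x) => [|d] /=.
  by rewrite inE (negbTE xr).
rewrite !inE => /orP[/depth_min|/existsP[y /andP[yd yx]]].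
  by rewrite dx ltnn.
by move: (no_parent y); rewrite yx dx ltnS depth_min.
Qed.

Definition parent_edge F (i : 'I_n) : {set V} := [set lift r i; parent F (lift r i)].

Definition parent_edges F : {set {set V}} := [set parent_edge F i | i : 'I_n].

Lemma lift_neq_root (i : 'I_n) : lift r i != r.
Proof. by rewrite eq_sym neq_lift. Qed.

Lemma depth_parent_lift F i : connectedb F ->
  (depth F (parent F (lift r i)) < depth F (lift r i))%N.
Proof. by move=> cF; case/andP: (parentP cF (lift_neq_root i)). Qed.

Lemma parent_edge_in F i : connectedb F -> parent_edge F i \in F.
Proof.
by move=> cF; case/andP: (parentP cF (lift_neq_root i)); rewrite /edge_rel setUC.
Qed.

Lemma parent_edge_inj F : connectedb F -> injective (parent_edge F).
Proof.
move=> cF i j eij; apply/eqP/negPn/negP => nij.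
have nlij : lift r i != lift r j by rewrite (inj_eq (@lift_inj _ r)).
have pj : lift r i = parent F (lift r j).
  have : lift r i \in parent_edge F j by rewrite -eij setU11.
  by rewrite !inE (negbTE nlij) => /eqP.
have pi : lift r j = parent F (lift r i).
  have : lift r j \in parent_edge F i by rewrite eij setU11.
  by rewrite !inE eq_sym (negbTE nlij) => /eqP.
have := depth_parent_lift i cF; rewrite -pi.
by have := depth_parent_lift j cF; rewrite -pj => /ltn_trans h /h; rewrite ltnn.
Qed.

Lemma parent_edges_subset F : connectedb F -> parent_edges F \subset F.
Proof. by move=> cF; apply/subsetP => e /imsetP[i _ ->]; apply: parent_edge_in. Qed.

Lemma card_parent_edges F : connectedb F -> #|parent_edges F| = n.
Proof. by move=> cF; rewrite card_imset ?card_ord //; apply: parent_edge_inj. Qed.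

Lemma connectedb_parent_edges F : connectedb F -> connectedb (parent_edges F).
Proof.
move=> cF; apply: connectedb_to_root => x.
elim: {x}(depth F x) {-2}x (leqnn (depth F x)) => [|k IH] x;
  case: (unliftP r x) => [i ->|-> _]; rewrite ?connect0 // => dx.
  by have := leq_trans (depth_parent_lift i cF) dx.
have dp : (depth F (parent F (lift r i)) <= k)%N.
  by rewrite -ltnS (leq_trans (depth_parent_lift i cF) dx).
apply: connect_trans (IH _ dp); apply: connect1.
by rewrite /edge_rel; apply: imset_f.
Qed.

Lemma spanning_tree_parent_edges E T : simple_graph E ->
  spanning_tree E T -> parent_edges T = T.
Proof.
move=> simpleE /and3P[sTE cT aT]; apply/eqP; rewrite eqEsubset parent_edges_subset //=.
apply/subsetP => e eT; apply/negPn/negP => ne.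
have /eqP/cards2P [x [y [nxy exy]]] := simpleE e (subsetP sTE e eT).
move/forallP: aT => /(_ x)/forallP/(_ y); rewrite -exy eT /= => /negP; apply.
apply: connect_edge_rel_subset (connectedbP _ (connectedb_parent_edges cT) x y).
apply/subsetP => f fP; rewrite in_setD1 (subsetP (parent_edges_subset cT)) // andbT.
by apply: contraNneq ne => <-.
Qed.

Lemma card_connectedb F : connectedb F -> (n <= #|F|)%N.
Proof.
move=> cF; rewrite -[X in (X <= _)%N](card_parent_edges cF).
by rewrite subset_leq_card ?parent_edges_subset.
Qed.

Lemma spanning_tree_of_card E F :
  F \subset E -> connectedb F -> #|F| = n -> spanning_tree E F.
Proof.
move=> sFE cF cardF; rewrite /spanning_tree sFE cF /=.
apply/forallP => x; apply/forallP => y; apply/implyP => xyF.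
apply/negP => /(connectedb_setD1 cF)/card_connectedb; apply/negP.
have := cardsD1 [set x; y] F; rewrite xyF cardF add1n => {1}->.
by rewrite ltnn.
Qed.

Lemma spanning_tree_exists E : connectedb E -> parent_edges E \in spanning_trees E.
Proof.
move=> cE; rewrite inE spanning_tree_of_card ?parent_edges_subset //.
  exact: connectedb_parent_edges.
exact: card_parent_edges.
Qed.

Section EdgeChoice.
Variable f : {ffun 'I_n -> {set V}}.
Hypotheses (f_inj : injective f) (f_lift : forall i : 'I_n, lift r i \in f i).
Let S := [set f i | i : 'I_n].
Hypothesis cS : connectedb S.

Lemma card_edge_choice : #|S| = n.
Proof. by rewrite card_imset ?card_ord. Qed.

Lemma edge_choice_parent : f =1 parent_edge S.
Proof.
have PS : parent_edges S = S.
  apply/eqP; rewrite eqEcard parent_edges_subset //.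
  by rewrite card_parent_edges // card_edge_choice leqnn.
move=> i; apply/eqP/negPn/negP => ni.
have [k nk kmax] := @arg_maxnP _ i (fun i => f i != parent_edge S i)
  (fun i => depth S (lift r i)) ni.
have /imsetP[j _ fkj] : f k \in parent_edges S by rewrite PS imset_f.
have : lift r k \in parent_edge S j by rewrite -fkj.
rewrite !inE => /orP[/eqP/lift_inj kj|/eqP kpj]; first by move: nk; rewrite fkj kj eqxx.
have nj : f j != parent_edge S j.
  apply/eqP => fj; have jk : j = k by apply: f_inj; rewrite fj fkj.
  by subst j; have := depth_parent_lift k cS; rewrite -kpj ltnn.
have := depth_parent_lift j cS; rewrite -kpj => /(leq_ltn_trans (kmax j nj)).
by rewrite ltnn.
Qed.

End EdgeChoice.

End SpanningTrees.

(** * The matrix-tree theorem *)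

Section Incidence.
Variables (K : comPzRingType) (n : nat).
Notation V := 'I_n.+1.
Implicit Types (e : {set V}) (x y : V).

Definition incidence e x : K :=
  if x \in e then (if [exists y in e, (y < x)%N] then -1 else 1) else 0.

Lemma incidence_out e x : x \notin e -> incidence e x = 0.
Proof. by rewrite /incidence => /negbTE ->. Qed.

Lemma incidence_sqr e x : incidence e x * incidence e x = (x \in e)%:R.
Proof.
rewrite /incidence; case: (x \in e); last by rewrite mulr0.
by case: ifP; rewrite ?mulrNN mulr1.
Qed.

Lemma incidence_lt x y : (x < y)%N ->
  incidence [set x; y] x = 1 /\ incidence [set x; y] y = -1.
Proof.
move=> xy; rewrite /incidence !inE !eqxx orbT; split.
  case: existsP => // -[z]; rewrite !inE => /andP[/orP[]/eqP-> ].
    by rewrite ltnn.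
  by rewrite ltnNge ltnW.
by case: existsP => // -[]; exists x; rewrite !inE eqxx.
Qed.

Lemma incidence_pairN x y : x != y -> incidence [set x; y] y = - incidence [set x; y] x.
Proof.
move=> nxy; have [xy|yx|/val_inj exy] := ltngtP x y; last by rewrite exy eqxx in nxy.
  by have [-> ->] := incidence_lt xy.
by rewrite setUC; have [-> ->] := incidence_lt yx; rewrite opprK.
Qed.

Lemma incidence_mul e x y : #|e| = 2%N -> x != y ->
  incidence e x * incidence e y = - (e == [set x; y])%:R.
Proof.
move=> e2 nxy; rewrite -(cards2_mem2 e2 nxy).
have [xe|/incidence_out->] := boolP (x \in e); last by rewrite mul0r oppr0.
have [ye|/incidence_out->] := boolP (y \in e); last by rewrite mulr0 oppr0.
have /eqP -> : e == [set x; y] by rewrite -(cards2_mem2 e2 nxy) xe ye.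
by rewrite incidence_pairN // mulrN incidence_sqr setU11.
Qed.

Lemma incidence_sum x y : x != y -> incidence [set x; y] x + incidence [set x; y] y = 0.
Proof. by move=> nxy; rewrite incidence_pairN // subrr. Qed.

Lemma sum_incidence_const e (g : V -> K) : #|e| = 2%N ->
  {in e &, forall x y, g x = g y} -> \sum_y incidence e y * g y = 0.
Proof.
move=> /eqP/cards2P[a [b [nab ->]]] gab.
rewrite (bigD1 a) // (bigD1 b) 1?eq_sym //= big1 ?addr0; last first.
  by move=> y /andP[ya yb]; rewrite incidence_out ?mul0r // !inE negb_or ya yb.
by rewrite (gab b a) ?inE ?eqxx ?orbT // -mulrDl incidence_sum // mul0r.
Qed.

End Incidence.

Arguments incidence {K n} e x.

Lemma rmorph_incidence (K L : comPzRingType) (f : {rmorphism K -> L}) n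
    (e : {set 'I_n.+1}) x :
  f (incidence e x) = incidence e x.
Proof.
rewrite /incidence; case: ifP => _; last exact: rmorph0.
by case: ifP => _; rewrite ?rmorphN rmorph1.
Qed.

Section LaplacianIncidence.
Variables (R : realFieldType) (n : nat) (E : {set {set 'I_n.+1}}).
Hypothesis simpleE : simple_graph E.
Implicit Type c : {set 'I_n.+1} -> R.

Lemma edge_other_end e i : e \in E -> i \in e -> exists k, e = [set i; k].
Proof.
move=> eE ie; have : #|e :\ i| == 1%N.
  by have := cardsD1 i e; rewrite ie simpleE // add1n => -[<-].
by case/cards1P => k ek; exists k; rewrite -ek setD1K.
Qed.

Lemma sum_adjw c i : \sum_k adjw E c i k = \sum_(e in E | i \in e) c e.
Proof.
have -> : \sum_k adjw E c i k = \sum_(k in [set k | [set i; k] \in E]) c [set i; k].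
  by rewrite [RHS]big_mkcond /=; apply: eq_bigr => k _; rewrite mxE inE.
rewrite -big_imset /=; last first.
  move=> k l; rewrite !inE => kE _ ekl.
  have ki : k != i by apply/eqP => ki; move: (simpleE kE); rewrite ki setUid cards1.
  have : k \in [set i; l] by rewrite -ekl !inE eqxx orbT.
  by rewrite !inE (negbTE ki) => /eqP.
apply: eq_bigl => e; apply/imsetP/andP => [[k]|[eE ie]].
  by rewrite inE => kE ->; rewrite kE setU11.
by have [k ek] := edge_other_end eE ie; exists k; rewrite ?inE -ek.
Qed.

Lemma laplacian_incidence c : laplacian E c =
  \matrix_(i, j) \sum_(e in E) c e * incidence e i * incidence e j.
Proof.
apply/matrixP => i j; rewrite !mxE.
have [<-|nij] := eqVneq i j.
  have iE : ([set i; i] \in E) = false.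
    by apply/negbTE/negP => /simpleE; rewrite setUid cards1.
  rewrite mul1r iE subr0 sum_adjw big_mkcondr /=; apply: eq_bigr => e _.
  by rewrite -mulrA incidence_sqr; case: (i \in e); rewrite ?mulr1 ?mulr0.
rewrite mul0r sub0r.
under eq_bigr => e eE do rewrite -mulrA incidence_mul ?simpleE // mulrN mulr_natr mulrb.
by rewrite sumrN -big_mkcondr big_mkcondl big_pred1_eq.
Qed.

End LaplacianIncidence.

Lemma det_sum_rank1 (K : comPzRingType) (m : nat) (I : finType)
    (c : I -> K) (b : I -> 'I_m -> K) :
  \det (\matrix_(i, j) \sum_e c e * b e i * b e j) =
  \sum_(f : {ffun 'I_m -> I})
     (\prod_i (c (f i) * b (f i) i)) * \det (\matrix_(i, j) b (f i) j).
Proof.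
rewrite /determinant.
under eq_bigr => s _.
  rewrite (eq_bigr (fun i => \sum_e c e * b e i * b e (s i))); last first.
    by move=> i _; rewrite mxE.
  rewrite bigA_distr_bigA big_distrr /=.
  over.
rewrite exchange_big /=; apply: eq_bigr => f _.
rewrite big_distrr /=; apply: eq_bigr => s _.
rewrite mulrCA; congr (_ * _).
by rewrite -big_split /=; apply: eq_bigr => i _; rewrite mxE.
Qed.

Lemma det_kernel_eq0 (K : comPzRingType) m (A : 'M[K]_m) (u : 'cV[K]_m) k :
  A *m u = 0 -> u k 0 = 1 -> \det A = 0.
Proof.
move=> Au0 uk1; have := congr1 (fun M => (\adj A *m M) k 0) Au0.
by rewrite /= mulmxA mul_adj_mx mul_scalar_mx mulmx0 !mxE uk1 mulr1.
Qed.

Section MatrixTree.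
Variables (K : comPzRingType) (n : nat) (r : 'I_n.+1) (E : {set {set 'I_n.+1}}).
Notation V := 'I_n.+1.
Implicit Types (c : {set V} -> K) (F T : {set {set V}}) (f : {ffun 'I_n -> {set V}}).

Definition grounded_laplacian c : 'M[K]_n :=
  \matrix_(i, j) \sum_(e in E) c e * incidence e (lift r i) * incidence e (lift r j).

Definition incidence_mx f : 'M[K]_n := \matrix_(i, j) incidence (f i) (lift r j).

Definition parent_ffun F : {ffun 'I_n -> {set V}} := [ffun i => parent_edge r F i].

Lemma parent_perm_id F (s : 'S_n) : connectedb F ->
  (forall i, lift r (s i) \in parent_edge r F i) -> s = 1%g.
Proof.
move=> cF sP; pose d (i : 'I_n) := depth r F (lift r i).
have le_d i : (d (s i) <= d i)%N.
  move: (sP i); rewrite /d !inE => /orP[/eqP/lift_inj->|/eqP->] //.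
  exact/ltnW/depth_parent_lift.
have /eqP : (\sum_i (d i - d (s i)) = 0)%N.
  have sum_ds : (\sum_i d (s i) = \sum_i d i)%N.
    by rewrite [RHS](reindex_inj (@perm_inj _ s)).
  by rewrite (sumnB _ (fun i _ => le_d i)) sum_ds subnn.
rewrite sum_nat_eq0 => /forallP d_eq; apply/permP => i; rewrite perm1.
move: (sP i) (d_eq i); rewrite /d !inE => /orP[/eqP/lift_inj-> //|/eqP ->].
by rewrite subn_eq0 leqNgt depth_parent_lift.
Qed.

Lemma det_incidence_parent F : connectedb F ->
  \det (incidence_mx (parent_ffun F)) = \prod_i incidence (parent_edge r F i) (lift r i).
Proof.
move=> cF; rewrite /determinant (bigD1 1%g) //= [X in _ + X]big1 ?addr0 => [|s s1].
  by rewrite odd_perm1 expr0 mul1r; apply: eq_bigr => i _; rewrite mxE perm1 ffunE.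
have [i si] : exists i, lift r (s i) \notin parent_edge r F i.
  apply/existsP; apply: contraNT s1 => /existsPn sP.
  by apply/eqP/(parent_perm_id cF) => i; apply/negbNE/sP.
by rewrite (bigD1 i) //= !mxE ffunE incidence_out // mul0r mulr0.
Qed.

Lemma det_incidence_disconnected f :
  ~~ connectedb [set f i | i : 'I_n] -> (forall i, #|f i| = 2%N) ->
  \det (incidence_mx f) = 0.
Proof.
set S := [set f i | i : 'I_n] => cS f2.
have [x xr] : exists x, ~~ connect (edge_rel S) x r.
  apply/existsP; apply: contraNT cS => /existsPn xr.
  by apply: connectedb_to_root => x; apply/negbNE/xr.
case: (unliftP r x) xr => [k -> xr|->]; last by rewrite connect0.
pose g y : K := (connect (edge_rel S) y (lift r k))%:R.
apply: (@det_kernel_eq0 _ _ _ (\col_j g (lift r j)) k); last by rewrite mxE /g connect0.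
apply/matrixP => i z; rewrite !mxE.
have := @sum_incidence_const _ _ (f i) g (f2 i).
have gr : g r = 0 by rewrite /g connect_edge_relC (negbTE xr).
rewrite (bigD1_ord r) //= gr mulr0 add0r.
under [X in _ -> X = 0]eq_bigr do rewrite !mxE.
have fiS : f i \in S by apply: imset_f.
by apply=> a b a_fi b_fi; rewrite /g (connect_edge_endpoints _ fiS (f2 i) a_fi b_fi).
Qed.

Hypothesis simpleE : simple_graph E.

Definition expansion_term c f : K :=
  \prod_i ((if f i \in E then c (f i) else 0) * incidence (f i) (lift r i))
  * \det (incidence_mx f).

Lemma expansion_term_tree c T : T \in spanning_trees E ->
  expansion_term c (parent_ffun T) = \prod_(e in T) c e.
Proof.
rewrite inE => Ttree; have /and3P[sTE cT _] := Ttree.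
rewrite /expansion_term det_incidence_parent //.
under eq_bigr do rewrite ffunE.
rewrite -big_split /= -[in RHS](spanning_tree_parent_edges r simpleE Ttree).
rewrite big_imset /=; last by move=> i j _ _; apply: parent_edge_inj.
apply: eq_bigr => i _.
by rewrite (subsetP sTE) ?parent_edge_in // -mulrA incidence_sqr setU11 mulr1.
Qed.

Lemma expansion_term_eq0 c f : f \notin parent_ffun @: spanning_trees E ->
  expansion_term c f = 0.
Proof.
move=> nf; rewrite /expansion_term.
case: (boolP [forall i, f i \in E]) => [/forallP fE|/forallPn[i /negbTE fiE]]; last first.
  by rewrite (bigD1 i) //= fiE !mul0r.
case: (boolP [forall i, lift r i \in f i]) => [/forallP fl|/forallPn[i li]]; last first.
  by rewrite (bigD1 i) //= incidence_out // mulr0 !mul0r.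
case: (boolP (injectiveb f)) => [/injectiveP finj|/injectivePn[i [j nij fij]]];
  last first.
  by rewrite (determinant_alternate nij) ?mulr0 // => k; rewrite !mxE fij.
have [cS|ncS] := boolP (connectedb [set f i | i : 'I_n]); last first.
  by rewrite (det_incidence_disconnected ncS (fun i => simpleE (fE i))) mulr0.
have Stree : [set f i | i : 'I_n] \in spanning_trees E.
  rewrite inE spanning_tree_of_card ?card_edge_choice //.
  by apply/subsetP => _ /imsetP[i _ ->]; apply: fE.
have fP : f = parent_ffun [set f i | i : 'I_n].
  by apply/ffunP => i; rewrite ffunE (edge_choice_parent finj fl cS).
by move: nf; rewrite fP imset_f.
Qed.

Theorem matrix_tree c :
  \det (grounded_laplacian c) = \sum_(T in spanning_trees E) \prod_(e in T) c e.
Proof.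
have -> : grounded_laplacian c = \matrix_(i, j) \sum_e
    (if e \in E then c e else 0) * incidence e (lift r i) * incidence e (lift r j).
  apply/matrixP => i j; rewrite !mxE big_mkcond; apply: eq_bigr => e _.
  by case: ifP; rewrite ?mul0r.
rewrite det_sum_rank1 (bigID (mem (parent_ffun @: spanning_trees E))) /=.
rewrite [X in _ + X]big1 ?addr0; last by move=> f; apply: expansion_term_eq0.
rewrite big_imset => [|T1 T2 /[!inE] T1tree T2tree eT].
  by apply: eq_bigr => T; apply: expansion_term_tree.
have pe i : parent_edge r T1 i = parent_edge r T2 i.
  by have := congr1 (fun f => f i) eT; rewrite !ffunE.
rewrite -(spanning_tree_parent_edges r simpleE T1tree).
by rewrite -(spanning_tree_parent_edges r simpleE T2tree) /parent_edges (eq_imset _ pe).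
Qed.

End MatrixTree.

(** * Tree moments of edge sums *)

Section GroundedLaplacian.
Variables (n : nat) (r : 'I_n.+1) (E : {set {set 'I_n.+1}}).
Implicit Type K : comPzRingType.

Lemma delrc_laplacian (R : realFieldType) (c : {set 'I_n.+1} -> R) :
  simple_graph E -> delrc r (laplacian E c) = grounded_laplacian r E c.
Proof. by move=> simpleE; apply/matrixP => i j; rewrite laplacian_incidence // !mxE. Qed.

Lemma grounded_laplacian_ext K (c c' : {set 'I_n.+1} -> K) :
  {in E, c =1 c'} -> grounded_laplacian r E c = grounded_laplacian r E c'.
Proof.
by move=> cc'; apply/matrixP => i j; rewrite !mxE; apply: eq_bigr => e /cc' ->.
Qed.

Lemma grounded_laplacian_pencil (K : comNzRingType) (c d : {set 'I_n.+1} -> K) :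
  grounded_laplacian r E (fun e => (c e)%:P + 'X * (d e)%:P) =
  pencil (grounded_laplacian r E c) (grounded_laplacian r E d).
Proof.
apply/matrixP => i j; rewrite !mxE !rmorph_sum big_distrr -big_split /=.
apply: eq_bigr => e _; rewrite !rmorphM !(rmorph_incidence polyC); ring.
Qed.

End GroundedLaplacian.

Section TreeMoments.
Variables (R : fieldType) (n : nat) (r : 'I_n.+1) (E : {set {set 'I_n.+1}}).
Hypothesis simpleE : simple_graph E.
Variables (w a : {set 'I_n.+1} -> R).
Local Notation L c := (grounded_laplacian r E c).
Hypothesis detL : \det (L w) != 0.
Local Notation X := (invmx (L w)).

Lemma tree_sum_linear :
  \sum_(T in spanning_trees E) (\prod_(e in T) w e) * \sum_(e in T) a e =
  \det (L w) * \tr (X *m L (fun e => w e * a e)).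
Proof.
pose gen e : {poly R} := (w e)%:P * (1 + (a e)%:P * 'X).
have -> : \det (L w) * \tr (X *m L (fun e => w e * a e)) = (\det (L gen))`_1.
  rewrite (_ : L gen = pencil (L w) (L (fun e => w e * a e))).
    by rewrite coef1_det_pencil adj_invmx // -scalemxAl mxtraceZ.
  rewrite -grounded_laplacian_pencil; apply: grounded_laplacian_ext => e _.
  by rewrite /gen polyCM; ring.
rewrite matrix_tree // coef_sum; apply: eq_bigr => T _.
by rewrite big_split /= -rmorph_prod coefCM coef1_prod_1X.
Qed.

Variable b : {set 'I_n.+1} -> R.

Let gen e : {poly {poly R}} :=
  ((w e)%:P * (1 + (b e)%:P * 'X))%:P * (1 + ((a e)%:P)%:P * 'X).

Let laplacian_gen : L gen =
  pencil (pencil (L w) (L (fun e => w e * b e)))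
         (pencil (L (fun e => w e * a e)) (L (fun e => w e * a e * b e))).
Proof.
rewrite -!grounded_laplacian_pencil; apply: grounded_laplacian_ext => e _.
rewrite /gen !rmorphD !rmorphM /= ?rmorph1 ?polyCX; ring.
Qed.

Let coef_gen (T : {set {set 'I_n.+1}}) : ((\prod_(e in T) gen e)`_1)`_1 =
  (\prod_(e in T) w e) * ((\sum_(e in T) a e) * (\sum_(e in T) b e)).
Proof.
rewrite big_split /= -rmorph_prod coefCM (coef1_prod_1X _ (fun e => (a e)%:P)).
rewrite -rmorph_sum big_split /= -rmorph_prod coefMC coefCM coef1_prod_1X.
by rewrite mulrA mulrAC.
Qed.

Lemma tree_sum_bilinear :
  \sum_(T in spanning_trees E)
      (\prod_(e in T) w e) * ((\sum_(e in T) a e) * (\sum_(e in T) b e)) =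
  \det (L w) * (\tr (X *m L (fun e => w e * a e * b e))
    + \tr (X *m L (fun e => w e * b e)) * \tr (X *m L (fun e => w e * a e))
    - \tr (X *m L (fun e => w e * b e) *m X *m L (fun e => w e * a e))).
Proof.
rewrite -coef11_det_bipencil // -laplacian_gen matrix_tree // !coef_sum.
by apply: eq_bigr => T _; rewrite coef_gen.
Qed.

End TreeMoments.

Section TreeStatistics.
Variables (R : realFieldType) (n : nat) (E : {set {set 'I_n.+1}}).
Variable w : {set 'I_n.+1} -> R.
Implicit Types X Y : {set {set 'I_n.+1}} -> R.

Lemma tree_expect_ext X Y : X =1 Y -> tree_expect E w X = tree_expect E w Y.
Proof. by move=> XY; rewrite /tree_expect; under eq_bigr do rewrite XY. Qed.

Lemma tree_cov_ext X X' Y Y' : X =1 X' -> Y =1 Y' ->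
  tree_cov E w X Y = tree_cov E w X' Y'.
Proof.
move=> XX' YY'; rewrite /tree_cov (tree_expect_ext XX') (tree_expect_ext YY').
by congr (_ - _); apply: tree_expect_ext => T; rewrite XX' YY'.
Qed.

End TreeStatistics.

Section EdgeSumStatistics.
Variables (R : realFieldType) (n : nat) (r : 'I_n.+1) (E : {set {set 'I_n.+1}}).
Variable w : {set 'I_n.+1} -> R.
Hypotheses (simpleE : simple_graph E) (connE : connectedb E).
Hypothesis w_gt0 : forall e, e \in E -> 0 < w e.
Local Notation L c := (grounded_laplacian r E c).
Local Notation X := (invmx (L w)).

Lemma tree_partition_gt0 : 0 < \sum_(T in spanning_trees E) tree_weight w T.
Proof.
have tree_gt0 T : T \in spanning_trees E -> 0 < tree_weight w T.
  rewrite inE => /and3P[sTE _ _]; apply: prodr_gt0 => e eT.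
  exact/w_gt0/(subsetP sTE).
have Ptree := spanning_tree_exists r connE.
rewrite (bigD1 _ Ptree) /= ltr_pwDl ?tree_gt0 //.
by apply: sumr_ge0 => T /andP[/tree_gt0/ltW].
Qed.

Lemma det_grounded_laplacian_neq0 : \det (L w) != 0.
Proof. by rewrite matrix_tree // lt0r_neq0 // tree_partition_gt0. Qed.

Lemma tree_expect_sum a :
  tree_expect E w (fun T => \sum_(e in T) a e) = \tr (X *m L (fun e => w e * a e)).
Proof.
have dL := det_grounded_laplacian_neq0.
rewrite /tree_expect /tree_weight (tree_sum_linear simpleE a dL).
by rewrite -(matrix_tree r simpleE w) mulrC mulKf.
Qed.

Lemma tree_cov_sum a b :
  tree_cov E w (fun T => \sum_(e in T) a e) (fun T => \sum_(e in T) b e) =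
  \tr ((L (fun e => w e * a e * b e)
        - L (fun e => w e * a e) *m X *m L (fun e => w e * b e)) *m X).
Proof.
have dL := det_grounded_laplacian_neq0.
rewrite /tree_cov !tree_expect_sum /tree_expect /tree_weight.
rewrite (tree_sum_bilinear simpleE a dL b) -(matrix_tree r simpleE w) mulrC mulKf //.
rewrite mulmxBl mxtraceD -scaleN1r mxtraceZ [\tr (L _ *m X)]mxtrace_mulC.
by rewrite [\tr (X *m _ *m X *m _)]mxtrace_mulC !mulmxA; ring.
Qed.

End EdgeSumStatistics.

Section DegreeLaplacians.
Variables (R : realFieldType) (n : nat) (r : 'I_n.+1) (E : {set {set 'I_n.+1}}).
Variables (w om : {set 'I_n.+1} -> R).
Hypothesis simpleE : simple_graph E.
Local Notation L c := (grounded_laplacian r E c).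

Definition incident_weight (v : 'I_n.+1) (e : {set 'I_n.+1}) : R :=
  if v \in e then om e else 0.
Local Notation a := incident_weight.

Lemma wdeg_sum T v : wdeg om T v = \sum_(e in T) a v e.
Proof. by rewrite /wdeg big_mkcondr. Qed.

Lemma delrc_lapv1 v : delrc r (lapv E w om 1 v) = L (fun e => w e * a v e).
Proof.
rewrite delrc_laplacian //; apply: grounded_laplacian_ext => e _.
by rewrite /a; case: ifP; rewrite ?expr1 ?mulr0.
Qed.

Lemma delrc_lapv2 v : delrc r (lapv E w om 2 v) = L (fun e => w e * a v e * a v e).
Proof.
rewrite delrc_laplacian //; apply: grounded_laplacian_ext => e _.
by rewrite /a; case: ifP; rewrite ?mulr0 // expr2 mulrA.
Qed.

Lemma delrc_lapvu v u : v != u ->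
  delrc r (lapvu E w om v u) = L (fun e => w e * a v e * a u e).
Proof.
move=> vu; rewrite delrc_laplacian //; apply: grounded_laplacian_ext => e eE.
rewrite -(cards2_mem2 (simpleE eE) vu) /a.
by case: (v \in e); case: (u \in e); rewrite ?mulr0 ?mul0r // expr2 mulrA.
Qed.

End DegreeLaplacians.

Theorem theorem3 (R : realFieldType) (n : nat) (E : {set {set 'I_n.+1}})
  (w om : {set 'I_n.+1} -> R) (r : 'I_n.+1) :
  simple_graph E ->
  connectedb E ->
  (forall e, e \in E -> 0 < w e) ->
  let LGr := delrc r (laplacian E w) in
  let L1 v := delrc r (lapv E w om 1 v) in
  let L2 v := delrc r (lapv E w om 2 v) in
  (forall v : 'I_n.+1,
     tree_expect E w (fun T => wdeg om T v) = \tr (L1 v *m invmx LGr)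
  /\ tree_var E w (fun T => wdeg om T v)
       = \tr ((L2 v - L1 v *m invmx LGr *m L1 v) *m invmx LGr))
  /\
  (forall v u : 'I_n.+1, u != v ->
     tree_cov E w (fun T => wdeg om T v) (fun T => wdeg om T u)
       = \tr ((delrc r (lapvu E w om v u) - L1 v *m invmx LGr *m L1 u)
              *m invmx LGr)).
Proof.
move=> simpleE connE w_gt0 LGr L1 L2.
have varE X : tree_var E w X = tree_cov E w X X by [].
have expectE := tree_expect_sum r simpleE connE w_gt0.
have covE := tree_cov_sum r simpleE connE w_gt0.
rewrite /LGr /L1 /L2 delrc_laplacian //; split => [v|v u uv] /=.
  rewrite delrc_lapv2 // delrc_lapv1 // varE (tree_expect_ext _ _ (wdeg_sum om ^~ v)).
  rewrite (tree_cov_ext _ _ (wdeg_sum om ^~ v) (wdeg_sum om ^~ v)).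
  by rewrite expectE covE mxtrace_mulC.
rewrite !delrc_lapv1 // delrc_lapvu 1?eq_sym //.
by rewrite (tree_cov_ext _ _ (wdeg_sum om ^~ v) (wdeg_sum om ^~ u)) covE.
Qed.
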